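(* Let $A$ be a finite abelian group with Pontryagin dual $\hat A$, and let $\mu,\nu$ be probability measures on $A$ and $\hat A$ respectively. Let $(\mathcal{M},\tau)$ be a von Neumann algebra with a normal faithful tracial state and $U:A\to\mathcal{U}(\mathcal{M})$, $V:\hat A\to\mathcal{U}(\mathcal{M})$ group homomorphisms satisfying \[\int\|U(a)V(\chi)-\chi(a)V(\chi)U(a)\|_2^2\,d\mu(a)\,d\nu(\chi)\leq\varepsilon.\] Then \[\mathbf{E}_{a\in A,\chi\in\hat A}\|U(a)V(\chi)-\chi(a)V(\chi)U(a)\|_2^2\leq\kappa(\mu)\kappa(\nu)\varepsilon.\]
   Context: $\hat A$ is the group of characters (homomorphisms $A\to\{z\in\mathbf{C}:|z|=1\}$). $\|x\|_2=\tau(x^*x)^{1/2}$, $\mathbf{E}$ is the uniform average. For a probability measure $\mu$ on a finite group $G$, $\kappa(\mu)\in[0,+\infty]$ is the smallest constant $\kappa$ such that for every unitary representation $(\pi,\mathcal{H})$ of $G$ and every $\xi$, $\|\xi-P_{\mathcal{H}^\pi}\xi\|^2\leq\frac\kappa2\int\|\pi(g)\xi-\xi\|^2d\mu(g)$, with $P_{\mathcal{H}^\pi}$ the projection onto invariant vectors (if some $\kappa$ is infinite the right side is $+\infty$). *)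

From mathcomp Require Import all_boot all_order all_algebra all_fingroup.
From mathcomp Require Import all_classical all_reals.
From mathcomp Require Import ereal.
From mathcomp Require Import complex.

Set Implicit Arguments.
Unset Strict Implicit.
Unset Printing Implicit Defensive.

Import Order.TTheory GRing.Theory Num.Theory.
Local Open Scope ring_scope.

Section Defs.
Variable R : realType.
Local Notation C := R[i].

Definition is_prob (T : finType) (mu : T -> R) : Prop :=
  (forall t, 0 <= mu t) /\ \sum_(t : T) mu t = 1.

Definition is_inner_product (H : lmodType C) (ip : H -> H -> C) : Prop :=
  [/\ forall (a : C) (x y z : H), ip (a *: x + y) z = a * ip x z + ip y z,
      forall x y : H, ip y x = conjc (ip x y),
      forall x : H, 0 <= ip x x
    & forall x : H, ip x x = 0 -> x = 0].

Definition hnorm2 (H : lmodType C) (ip : H -> H -> C) (x : H) : R :=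
  complex.Re (ip x x).

Definition ip_complete (H : lmodType C) (ip : H -> H -> C) : Prop :=
  forall u : nat -> H,
    (forall e : R, 0 < e -> exists N : nat, forall m n : nat,
        (N <= m)%N -> (N <= n)%N -> hnorm2 ip (u m - u n) < e ^+ 2) ->
    exists l : H, forall e : R, 0 < e -> exists N : nat, forall n : nat,
        (N <= n)%N -> hnorm2 ip (u n - l) < e ^+ 2.

Definition is_hilbert (H : lmodType C) (ip : H -> H -> C) : Prop :=
  is_inner_product ip /\ ip_complete ip.

Definition unitary_rep (G : finGroupType) (H : lmodType C)
    (ip : H -> H -> C) (pi : G -> H -> H) : Prop :=
  [/\ forall g (a : C) (x y : H), pi g (a *: x + y) = a *: pi g x + pi g y,
      forall g (x y : H), ip (pi g x) (pi g y) = ip x y,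
      forall g (y : H), exists x : H, pi g x = y
    & forall g h (x : H), pi (g * h)%g x = pi g (pi h x)].

Definition invariant_vec (G : finGroupType) (H : lmodType C)
    (pi : G -> H -> H) (x : H) : Prop := forall g, pi g x = x.

(** The defining inequality of kappa for the constant k:
    ||xi - P xi||^2 <= k/2 \int ||pi(g) xi - xi||^2 dmu(g), for every unitary
    representation; P xi is the orthogonal projection onto H^pi, i.e. the
    invariant vector eta with xi - eta orthogonal to H^pi. *)
Definition kappa_ineq (G : finGroupType) (mu : G -> R) (k : R) : Prop :=
  forall (H : lmodType C) (ip : H -> H -> C) (pi : G -> H -> H),
    is_hilbert ip -> unitary_rep ip pi ->
    forall xi eta : H,
      invariant_vec pi eta ->
      (forall zeta : H, invariant_vec pi zeta -> ip (xi - eta) zeta = 0) ->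
      hnorm2 ip (xi - eta)
        <= k / 2 * \sum_(g : G) mu g * hnorm2 ip (pi g xi - xi).

(** kappa(mu) in [0, +oo]: the smallest (infimum of the) admissible constants;
    +oo if there is none. *)
Definition kappa (G : finGroupType) (mu : G -> R) : \bar R :=
  ereal_inf [set (k%:E)%E | k in [set k : R | 0 <= k /\ kappa_ineq mu k]].

Definition is_star (M : algType C) (star : M -> M) : Prop :=
  [/\ forall x y : M, star (x + y) = star x + star y,
      forall (a : C) (x : M), star (a *: x) = conjc a *: star x,
      forall x y : M, star (x * y) = star y * star x
    & forall x : M, star (star x) = x].

Definition is_faithful_tracial_state (M : algType C) (star : M -> M)
    (tau : M -> C) : Prop :=
  [/\ forall (a : C) (x y : M), tau (a *: x + y) = a * tau x + tau y,
      forall x y : M, tau (x * y) = tau (y * x),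
      tau 1 = 1,
      forall x : M, 0 <= tau (star x * x)
    & forall x : M, tau (star x * x) = 0 -> x = 0].

Definition norm2sq (M : algType C) (star : M -> M) (tau : M -> C) (x : M) : R :=
  complex.Re (tau (star x * x)).

Definition is_unitary (M : algType C) (star : M -> M) (u : M) : Prop :=
  star u * u = 1 /\ u * star u = 1.

Definition unitary_hom (G : finGroupType) (M : algType C) (star : M -> M)
    (U : G -> M) : Prop :=
  (forall g, is_unitary star (U g)) /\
  (forall g h, U (g * h)%g = U g * U h).

(** Ahat, together with the pairing chi, is the Pontryagin dual of A:
    chi identifies the group Ahat with the group of characters
    A -> {z : C | |z| = 1} (pointwise multiplication). *)
Definition is_dual_pairing (A Ahat : finGroupType) (chi : Ahat -> A -> C) : Prop :=
  [/\ forall (x y : Ahat) (a : A), chi (x * y)%g a = chi x a * chi y a,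
      forall (x : Ahat) (a b : A), chi x (a * b)%g = chi x a * chi x b,
      forall (x : Ahat) (a : A), `|chi x a| = 1,
      forall x y : Ahat, (forall a, chi x a = chi y a) -> x = y
    & forall f : A -> C, (forall a b, f (a * b)%g = f a * f b) ->
        (forall a, `|f a| = 1) -> exists x : Ahat, forall a, chi x a = f a].

End Defs.

(* For a fixed character chi, the function a |-> ||U(a)V(chi) - chi(a)V(chi)U(a)||_2^2
   equals 2 - 2 Re phi(a) with phi(a) = chi(a) tau(V(chi)^* U(a)^* V(chi) U(a)).
   This phi is positive definite on A (its Fourier coefficients are values of tau
   on elements Z^* Z), so Fourier inversion writes 1 - Re phi as a nonnegative
   combination of the functions Re(1 - psi), psi a character of A.  For a single
   character the inequality defining kappa(mu), tested on the one-dimensional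
   representation psi with xi = 1, gives E Re(1 - psi) <= kappa(mu) int Re(1 - psi) dmu.
   Hence averaging over a is controlled by kappa(mu) times integration against mu;
   symmetrically averaging over chi is controlled by kappa(nu), and the two bounds
   compose. *)

From mathcomp Require Import all_boot all_order all_algebra all_fingroup.
From mathcomp Require Import cyclic separable cyclotomic algC classfun character.
From mathcomp Require Import all_classical all_reals ereal complex.
From mathcomp Require Import topology normedtype.
From mathcomp Require Import ring lra.

Set Implicit Arguments.
Unset Strict Implicit.
Unset Printing Implicit Defensive.
Import Order.TTheory GRing.Theory Num.Theory numFieldNormedType.Exports.
Local Open Scope ring_scope.

(** * The complex plane as a Hilbert space *)

Lemma real_cauchy_cvg (R : realType) (u : nat -> R) :
  (forall e : R, 0 < e -> exists N : nat, forall m n : nat,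
        (N <= m)%N -> (N <= n)%N -> `|u m - u n| < e) ->
  exists l : R, forall e : R, 0 < e -> exists N : nat, forall n : nat,
        (N <= n)%N -> `|u n - l| < e.
Proof.
move=> u_cauchy; have : cvgn u.
  apply/cauchy_cvgP/cauchy_ballP => e e0; have [N uN] := u_cauchy e e0.
  pose tail := (u @` [set n | (N <= n)%N])%classic.
  exists (tail, tail); first by split; exists N => // n Nn; exists n.
  by case=> _ _ [[m Nm <-] [n Nn <-]]; rewrite /ball /= distrC uN.
move=> /cvgrPdistC_lt u_cvg; exists (limn u) => e /u_cvg [N _ uN].
by exists N => n; apply: uN.
Qed.

Section ComplexPlane.
Variable R : realType.
Local Notation C := R[i].
Local Notation Re := (@complex.Re R).
Local Notation Im := (@complex.Im R).

Lemma ReB (x y : C) : Re (x - y) = Re x - Re y.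
Proof. exact: (raddfB (Re : Rcomplex R -> R)). Qed.

Lemma ImB (x y : C) : Im (x - y) = Im x - Im y.
Proof. exact: (raddfB (Im : Rcomplex R -> R)). Qed.

Lemma Re_sum (I : finType) (F : I -> C) : Re (\sum_i F i) = \sum_i Re (F i).
Proof. exact: (raddf_sum (Re : Rcomplex R -> R)). Qed.

Lemma Re_mul_real (p w : C) : Im p = 0 -> Re (p * w) = Re p * Re w.
Proof. by case: p => a b; case: w => c d /= ->; ring. Qed.

Lemma Re_ge0 (z : C) : 0 <= z -> 0 <= Re z.
Proof. by rewrite lecE => /andP[]. Qed.

Definition ipC (x y : C^o) : C := x * y^*%C.

Lemma hnorm2_ipC (z : C) : hnorm2 ipC z = Re z ^+ 2 + Im z ^+ 2.
Proof. by case: z => a b; rewrite /hnorm2 /ipC /=; ring. Qed.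

Lemma ipC_inner_product : is_inner_product ipC.
Proof.
split=> [a x y z|x y|x|x].
- by rewrite /ipC mulrDl mulrA.
- by rewrite /ipC rmorphM /= conjcK mulrC.
- exact: mul_conjC_ge0.
- by move/eqP; rewrite /ipC mul_conjC_eq0 => /eqP.
Qed.

Lemma ipC_complete : ip_complete ipC.
Proof.
move=> u u_cauchy.
have part_cvg (p : C -> R) : (forall z, p z ^+ 2 <= hnorm2 ipC z) ->
    (forall x y, p (x - y) = p x - p y) ->
    exists l, forall e, 0 < e -> exists N : nat, forall n : nat,
      (N <= n)%N -> `|p (u n) - l| < e.
  move=> p_le pB; apply: real_cauchy_cvg => e e0.
  have [N uN] := u_cauchy e e0; exists N => m n Nm Nn; rewrite -pB.
  have := le_lt_trans (p_le _) (uN m n Nm Nn).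
  rewrite -real_normK ?num_real; have := normr_ge0 (p (u m - u n)); nra.
have Re_le z : Re z ^+ 2 <= hnorm2 ipC z by rewrite hnorm2_ipC lerDl sqr_ge0.
have Im_le z : Im z ^+ 2 <= hnorm2 ipC z by rewrite hnorm2_ipC lerDr sqr_ge0.
have [l1 ul1] := part_cvg Re Re_le ReB; have [l2 ul2] := part_cvg Im Im_le ImB.
exists (l1 +i* l2)%C => e e0.
have e2 : 0 < e / 2 by rewrite divr_gt0.
have [N1 uN1] := ul1 _ e2; have [N2 uN2] := ul2 _ e2.
exists (maxn N1 N2) => n; rewrite geq_max => /andP[/uN1 lt1 /uN2 lt2].
rewrite hnorm2_ipC ReB ImB -(real_normK (num_real (Re _ - _))).
rewrite -(real_normK (num_real (Im _ - _))) /=.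
have := normr_ge0 (Re (u n) - l1); have := normr_ge0 (Im (u n) - l2); nra.
Qed.

Lemma ipC_hilbert : is_hilbert ipC.
Proof. exact: (conj ipC_inner_product ipC_complete). Qed.

(** * Circle characters and the constant kappa *)

Definition circle_char (G : finGroupType) (psi : G -> C) : Prop :=
  (forall g h, psi (g * h)%g = psi g * psi h) /\ (forall g, `|psi g| = 1).

Section CircleChar.
Variables (G : finGroupType) (psi : G -> C).
Hypothesis psi_char : circle_char psi.

Lemma circle_char_mulJ g : psi g * (psi g)^*%C = 1.
Proof. by rewrite -normCK (proj2 psi_char) expr1n. Qed.

Lemma circle_char_neq0 g : psi g != 0.
Proof. by rewrite -normr_eq0 (proj2 psi_char) oner_eq0. Qed.

Lemma circle_char1 : psi 1%g = 1.
Proof.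
apply: (mulfI (circle_char_neq0 1%g)).
by rewrite -(proj1 psi_char) mulg1 mulr1.
Qed.

Lemma circle_charV g : psi g^-1%g = (psi g)^*%C.
Proof.
apply: (mulfI (circle_char_neq0 g)).
by rewrite -(proj1 psi_char) mulgV circle_char1 circle_char_mulJ.
Qed.

Lemma circle_charJ : circle_char (fun g => (psi g)^*%C).
Proof.
split=> [g h|g]; first by rewrite (proj1 psi_char) rmorphM.
by rewrite norm_conjC (proj2 psi_char).
Qed.

Lemma sum_circle_char_eq0 g0 : psi g0 != 1 -> \sum_g psi g = 0.
Proof.
move=> psi_g0; have sum_fixed : \sum_g psi g = psi g0 * \sum_g psi g.
  rewrite mulr_sumr (reindex_inj (mulgI g0)) /=.
  by apply: eq_bigr => g _; rewrite (proj1 psi_char).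
have : (1 - psi g0) * \sum_g psi g = 0 by rewrite mulrBl mul1r -sum_fixed subrr.
by move/eqP; rewrite mulf_eq0 subr_eq0 eq_sym (negbTE psi_g0) => /eqP.
Qed.

End CircleChar.

Lemma hnorm2_ipC_sub1 (z : C) : `|z| = 1 -> hnorm2 ipC (z - 1) = 2 * Re (1 - z).
Proof.
move=> z1; have : ((Re z ^+ 2 + Im z ^+ 2)%:C = 1%:C :> C)%C by rewrite add_Re2_Im2 z1 expr1n.
case=> ReIm1; rewrite hnorm2_ipC !ReB ImB /=; nra.
Qed.

Section KappaCircleChar.
Variables (G : finGroupType) (mu : G -> R) (k : R) (psi : G -> C).
Hypotheses (kappa_k : kappa_ineq mu k) (psi_char : circle_char psi).

Let pi (g : G) (x : C^o) : C^o := psi g * x.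

Let pi_unitary : unitary_rep ipC pi.
Proof.
split=> [g a x y|g x y|g y|g h x]; rewrite /pi.
- by rewrite mulrDr mulrCA.
- by rewrite /ipC rmorphM mulrACA circle_char_mulJ // mul1r.
- by exists ((psi g)^*%C * y); rewrite mulrA circle_char_mulJ // mul1r.
- by rewrite (proj1 psi_char) mulrA.
Qed.

(* A nontrivial character has no nonzero invariant vector, so xi = 1 is orthogonal
   to the invariant vectors and its projection onto them is 0. *)
Lemma one_le_kappa_circle_char g0 :
  psi g0 != 1 -> 1 <= k * \sum_g mu g * Re (1 - psi g).
Proof.
move=> psi_g0; have inv0 : invariant_vec pi 0 by move=> g; rewrite /pi mulr0.
have orth0 zeta : invariant_vec pi zeta -> ipC ((1 : C^o) - 0) zeta = 0.
  move=> /(_ g0); rewrite /pi => zeta_fix; have : (psi g0 - 1) * zeta = 0.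
    by rewrite mulrBl mul1r zeta_fix subrr.
  by move/eqP; rewrite mulf_eq0 subr_eq0 (negbTE psi_g0) => /eqP ->; rewrite /ipC conjc0 mulr0.
suff <- : k / 2 * \sum_g mu g * hnorm2 ipC (pi g 1 - 1) = k * \sum_g mu g * Re (1 - psi g).
  have := kappa_k ipC_hilbert pi_unitary inv0 orth0.
  by rewrite subr0 hnorm2_ipC /= expr1n expr0n addr0.
under eq_bigr do rewrite /pi mulr1 hnorm2_ipC_sub1 ?psi_char.2 // mulrCA.
by rewrite -mulr_sumr mulrA divfK.
Qed.

Lemma kappa_ineq_circle_char :
  (\sum_g Re (1 - psi g)) / #|G|%:R <= k * \sum_g mu g * Re (1 - psi g).
Proof.
case: (boolP [exists g, psi g != 1]) => [/existsP[g0 psi_g0]|/existsPn psi_triv].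
  rewrite -Re_sum sumrB (sum_circle_char_eq0 psi_char psi_g0) subr0 sumr_const.
  rewrite (raddfMn (Re : Rcomplex R -> R)) /= divff ?pnatr_eq0 -?lt0n -?cardsT ?cardG_gt0 //.
  exact: one_le_kappa_circle_char psi_g0.
have psi1 g : psi g = 1 by apply/eqP; rewrite -[_ == _]negbK psi_triv.
by rewrite !big1 ?mul0r ?mulr0 // => g _; rewrite psi1 subrr ?mulr0.
Qed.

End KappaCircleChar.

(** * Fourier expansion along a separating pairing *)

Definition char_pairing (J G : finGroupType) (psi : J -> G -> C) : Prop :=
  [/\ forall j, circle_char (psi j), forall g, circle_char (psi^~ g)
    & forall g, g != 1%g -> exists j, psi j g != 1].

Section CharPairing.
Variables (J G : finGroupType) (psi : J -> G -> C).
Hypothesis psi_pairing : char_pairing psi.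

Lemma sum_char_pairing g : \sum_j psi j g = if g == 1%g then #|J|%:R else 0.
Proof.
case: psi_pairing => psi_char psi_charT psi_sep; case: eqP => [->|/eqP g_ne1].
  by under eq_bigr do rewrite circle_char1 //; rewrite sumr_const.
have [j0 psi_j0] := psi_sep g g_ne1.
exact: (@sum_circle_char_eq0 _ (psi^~ g) (psi_charT g) j0 psi_j0).
Qed.

Definition fourier_coef (phi : G -> C) (j : J) : C :=
  (\sum_g phi g * (psi j g)^*%C) / #|J|%:R.

Lemma fourier_inversion (phi : G -> C) g : phi g = \sum_j fourier_coef phi j * psi j g.
Proof.
have [psi_char _ _] := psi_pairing.
have coefE j : fourier_coef phi j * psi j g = (\sum_h phi h * psi j (g * h^-1)%g) / #|J|%:R.
  rewrite /fourier_coef mulrAC; congr (_ * _); rewrite mulr_suml; apply: eq_bigr => h _.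
  by rewrite (proj1 (psi_char j)) (circle_charV (psi_char j)) mulrAC mulrA.
under eq_bigr do rewrite coefE.
rewrite -mulr_suml exchange_big /=.
under eq_bigr do rewrite -mulr_sumr sum_char_pairing.
rewrite (bigD1 g) //= mulgV eqxx big1 ?addr0 => [|h h_ne_g].
  by rewrite mulfK // pnatr_eq0 -lt0n -cardsT cardG_gt0.
by rewrite -eq_mulgV1 eq_sym (negbTE h_ne_g) mulr0.
Qed.

Lemma avg_le_kappa_of_fourier_ge0 (phi : G -> C) (mu : G -> R) (k : R) :
  kappa_ineq mu k -> (forall j, 0 <= fourier_coef phi j) -> phi 1%g = 1 ->
  (\sum_g (1 - Re (phi g))) / #|G|%:R <= k * \sum_g mu g * (1 - Re (phi g)).
Proof.
move=> kappa_k coef_ge0 phi1; have [psi_char _ _] := psi_pairing.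
pose a j := Re (fourier_coef phi j); pose b j g := Re (1 - psi j g).
have one_subRe g : 1 - Re (phi g) = \sum_j a j * b j g.
  rewrite -[1]/(Re 1) -phi1 -ReB (fourier_inversion phi 1%g) (fourier_inversion phi g).
  rewrite -sumrB Re_sum; apply: eq_bigr => j _.
  by rewrite -mulrBr Re_mul_real ?circle_char1 // ger0_Im.
have -> : (\sum_g (1 - Re (phi g))) / #|G|%:R = \sum_j a j * ((\sum_g b j g) / #|G|%:R).
  under eq_bigr do rewrite one_subRe.
  by rewrite exchange_big mulr_suml; apply: eq_bigr => j _; rewrite -mulr_sumr mulrA.
have -> : k * \sum_g mu g * (1 - Re (phi g)) = \sum_j a j * (k * \sum_g mu g * b j g).
  under eq_bigr do rewrite one_subRe mulr_sumr.
  rewrite exchange_big mulr_sumr; apply: eq_bigr => j _.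
  by rewrite mulrCA !mulr_sumr; apply: eq_bigr => g _; rewrite [mu g * _]mulrCA.
apply: ler_sum => j _; apply: ler_wpM2l; first exact: Re_ge0.
exact: kappa_ineq_circle_char.
Qed.

End CharPairing.

(** * Tracial star-algebras *)

Section TracialStarAlgebra.
Variables (M : algType C) (star : M -> M) (tau : M -> C).
Hypotheses (star_M : is_star star) (tau_M : is_faithful_tracial_state star tau).

Lemma tauD x y : tau (x + y) = tau x + tau y.
Proof. by case: tau_M => tau_lin _ _ _ _; have := tau_lin 1 x y; rewrite scale1r mul1r. Qed.

Lemma tau0 : tau 0 = 0.
Proof. by apply: (addIr (tau 0)); rewrite -tauD !add0r. Qed.

Lemma tauZ a x : tau (a *: x) = a * tau x.
Proof.
by case: tau_M => tau_lin _ _ _ _; have := tau_lin a x 0; rewrite !addr0 tau0 addr0.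
Qed.

Lemma tauB x y : tau (x - y) = tau x - tau y.
Proof. by rewrite tauD -scaleN1r tauZ mulN1r. Qed.

Lemma tau_sum (I : finType) (F : I -> M) : tau (\sum_i F i) = \sum_i tau (F i).
Proof. exact: (big_morph tau tauD tau0). Qed.

Lemma tauC x y : tau (x * y) = tau (y * x).
Proof. by case: tau_M. Qed.

Lemma tau1 : tau 1 = 1.
Proof. by case: tau_M. Qed.

Lemma tau_ge0 x : 0 <= tau (star x * x).
Proof. by case: tau_M. Qed.

Lemma starD x y : star (x + y) = star x + star y. Proof. by case: star_M. Qed.
Lemma starZ a x : star (a *: x) = a^*%C *: star x. Proof. by case: star_M. Qed.
Lemma starM x y : star (x * y) = star y * star x. Proof. by case: star_M. Qed.
Lemma starK : involutive star. Proof. by case: star_M. Qed.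

Lemma star0 : star 0 = 0.
Proof. by rewrite -(scale0r 0) starZ conjc0 !scale0r. Qed.

Lemma starB x y : star (x - y) = star x - star y.
Proof. by rewrite starD -scaleN1r starZ rmorphN1 scaleN1r. Qed.

Lemma star_sum (I : finType) (F : I -> M) : star (\sum_i F i) = \sum_i star (F i).
Proof. exact: (big_morph star starD star0). Qed.

Lemma star1 : star 1 = 1.
Proof. by rewrite -[star 1]mulr1 -{2}[1]starK -starM mulr1 starK. Qed.

(* tau is real on (x + 1)^* (x + 1) and on (x + i)^* (x + i). *)
Lemma tau_star x : tau (star x) = (tau x)^*%C.
Proof.
have Im_tau_sq y : Im (tau (star y * y)) = 0 by apply/ger0_Im/tau_ge0.
have := Im_tau_sq (x + 1); have := Im_tau_sq (x + 'i%C *: 1); move: (Im_tau_sq x).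
rewrite !starD starZ star1 !mulrDl !mulrDr -!scalerAl -!scalerAr !mulr1 !mul1r scalerA.
rewrite !tauD !tauZ tau1.
move: (tau (star x * x)) (tau (star x)) (tau x) => [t1 t2] [a1 a2] [b1 b2] /= t2_0.
move=> Im_i Im_1; apply/eqP; rewrite eq_complex /=; apply/andP; split; apply/eqP; lra.
Qed.

Section UnitaryHom.
Variables (G : finGroupType) (P : G -> M).
Hypothesis P_hom : unitary_hom star P.

Lemma unitary_hom1 : P 1%g = 1.
Proof.
have [[P1_unit _] _] := (P_hom.1 1%g, P_hom.2).
by rewrite -[P 1%g]mul1r -P1_unit -mulrA -P_hom.2 mulg1.
Qed.

Lemma unitary_homV g : P g^-1%g = star (P g).
Proof.
have [Pg_unit _] := P_hom.1 g.
by rewrite -[P _]mul1r -Pg_unit -mulrA -P_hom.2 mulgV unitary_hom1 mulr1.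
Qed.

End UnitaryHom.

Lemma norm2sq_ge0 x : 0 <= norm2sq star tau x.
Proof. exact/Re_ge0/tau_ge0. Qed.

Lemma norm2sq_scale_unit (a : C) x :
  `|a| = 1 -> norm2sq star tau (a *: x) = norm2sq star tau x.
Proof.
move=> a1; rewrite /norm2sq starZ -scalerAl -scalerAr scalerA tauZ.
by rewrite -normCKC a1 expr1n mul1r.
Qed.

Lemma norm2sq_commutator (Q P : M) (c : C) :
  is_unitary star Q -> is_unitary star P -> `|c| = 1 ->
  norm2sq star tau (Q * P - c *: (P * Q)) =
    2 - 2 * Re (c * tau (star P * star Q * P * Q)).
Proof.
move=> [Q_unit _] [P_unit _] c1.
have cJc : c^*%C * c = 1 by rewrite -normCKC c1 expr1n.
rewrite /norm2sq starB starZ !starM mulrBl !mulrBr.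
rewrite -!scalerAl -!scalerAr scalerA cJc scale1r.
have -> : star P * star Q * (Q * P) = 1 by rewrite mulrA -(mulrA _ _ Q) Q_unit mulr1.
have -> : star Q * star P * (P * Q) = 1 by rewrite mulrA -(mulrA _ _ P) P_unit mulr1.
have -> : star Q * star P * (Q * P) = star (star P * star Q * P * Q).
  by rewrite !starM !starK !mulrA.
rewrite !tauB !tauZ tau1 tau_star !mulrA -rmorphM.
by case: (c * _) => a b /=; ring.
Qed.

(* P Q - c^* Q P = - c^* (Q P - c P Q). *)
Lemma norm2sq_commutatorC (Q P : M) (c : C) : `|c| = 1 ->
  norm2sq star tau (Q * P - c *: (P * Q)) = norm2sq star tau (P * Q - c^*%C *: (Q * P)).
Proof.
move=> c1; have Jc1 : `|- c^*%C| = 1 by rewrite normrN norm_conjC.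
rewrite -(norm2sq_scale_unit (Q * P - c *: (P * Q)) Jc1) scalerBr scalerA mulNr.
by rewrite -normCKC c1 expr1n scaleN1r opprK scaleNr addrC.
Qed.

(* The sum is tau(Z^* Z) / #|G| for Z = \sum_g c g (psi g)^* P(g)^* W P(g). *)
Lemma trace_fourier_ge0 (G : finGroupType) (P : G -> M) (W : M) (c psi : G -> C) :
  unitary_hom star P -> circle_char c -> circle_char psi ->
  0 <= \sum_g c g * tau (star W * star (P g) * W * P g) * (psi g)^*%C.
Proof.
move=> P_hom c_char psi_char.
pose F g := c g * tau (star W * star (P g) * W * P g) * (psi g)^*%C.
pose d g := c g * (psi g)^*%C.
pose Z := \sum_g d g *: (star (P g) * W * P g).
have starZ_sum : star Z = \sum_h (d h)^*%C *: (star (P h) * star W * P h).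
  by rewrite star_sum; apply: eq_bigr => h _; rewrite starZ !starM starK mulrA.
have tau_term h g : (d h)^*%C * d g * tau (star (P h) * star W * P h * (star (P g) * W * P g))
    = F (g * h^-1)%g.
  have Phg : P h * star (P g) = star (P (g * h^-1)%g).
    by rewrite -!unitary_homV // -P_hom.2 invMg invgK.
  have Pgh : P g * star (P h) = P (g * h^-1)%g by rewrite -unitary_homV // -P_hom.2.
  rewrite -!mulrA tauC !mulrA -(mulrA _ (P h)) Phg -(mulrA _ (P g)) Pgh.
  rewrite /F /d !rmorphM /= conjcK c_char.1 psi_char.1 (circle_charV c_char).
  by rewrite (circle_charV psi_char) rmorphM /= conjcK; ring.
have tau_ZZ : tau (star Z * Z) = (\sum_g F g) *+ #|G|.
  rewrite starZ_sum mulr_suml tau_sum -sumr_const; apply: eq_bigr => h _.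
  rewrite (reindex_inj (mulIg h^-1)%g) mulr_sumr tau_sum; apply: eq_bigr => g _.
  by rewrite -scalerAl -scalerAr scalerA tauZ tau_term.
by have := tau_ge0 Z; rewrite tau_ZZ -mulr_natl pmulr_rge0 // ltr0n -cardsT cardG_gt0.
Qed.

Lemma avg_commutator_le_kappa (J G : finGroupType) (psi : J -> G -> C)
    (P : G -> M) (W : M) (c : G -> C) (mu : G -> R) (k : R) :
  char_pairing psi -> unitary_hom star P -> is_unitary star W -> circle_char c ->
  kappa_ineq mu k ->
  (\sum_g norm2sq star tau (P g * W - c g *: (W * P g))) / #|G|%:R
    <= k * \sum_g mu g * norm2sq star tau (P g * W - c g *: (W * P g)).
Proof.
move=> psi_pairing P_hom W_unit c_char kappa_k; have [psi_char _ _] := psi_pairing.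
pose phi g := c g * tau (star W * star (P g) * W * P g).
have norm2sqE g : norm2sq star tau (P g * W - c g *: (W * P g)) = 2 * (1 - Re (phi g)).
  by rewrite (norm2sq_commutator (P_hom.1 g) W_unit (c_char.2 g)) mulrBr mulr1.
have phi1 : phi 1%g = 1.
  by rewrite /phi circle_char1 // unitary_hom1 // star1 !mulr1 W_unit.1 tau1 mul1r.
have coef_ge0 j : 0 <= fourier_coef psi phi j.
  by rewrite divr_ge0 ?ler0n //; apply: trace_fourier_ge0.
under eq_bigr do rewrite norm2sqE.
under [X in _ <= k * X]eq_bigr do rewrite norm2sqE mulrCA.
rewrite -!mulr_sumr -[2 * _ / _]mulrA [k * _]mulrCA; apply: ler_wpM2l => //.
by apply: (avg_le_kappa_of_fourier_ge0 psi_pairing).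
Qed.

End TracialStarAlgebra.

(** * Characters of finite abelian groups *)

Lemma closed_prim_root_exists (F : closedFieldType) (n : nat) :
  n%:R != 0 :> F -> {z : F | n.-primitive_root z}.
Proof.
move=> n_neq0; have n_gt0 : (0 < n)%N by rewrite lt0n; apply: contraNneq n_neq0 => ->.
pose p : {poly F} := 'X^n - 1; have [r Dp] := closed_field_poly_normal p.
apply/sigW; rewrite (monicP _) ?monicXnsubC // scale1r in Dp.
have rn1 : all n.-unity_root r by apply/allP => z; rewrite -root_prod_XsubC -Dp.
have sz_r : (n < (size r).+1)%N by rewrite -(size_prod_XsubC r id) -Dp size_XnsubC.
have [|z] := hasP (has_prim_root n_gt0 rn1 _ sz_r); last by exists z.
by rewrite -separable_prod_XsubC -Dp separable_Xn_sub_1.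
Qed.

(* The values of xi are powers of a primitive #|gT|-th root of unity z in algC;
   replacing z by a primitive root t in C keeps every multiplicative relation. *)
Lemma circle_char_of_lin_char (gT : finGroupType) (xi : 'CF([set: gT])) :
  xi \is a linear_char ->
  exists psi : gT -> C, circle_char psi /\ forall g, (psi g == 1) = (xi g == 1).
Proof.
move=> xi_lin; have n_gt0 : (0 < #|gT|)%N by rewrite -cardsT cardG_gt0.
have xi_unity g : xi g ^+ #|gT| = 1.
  by rewrite -cardsT -lin_charX ?inE // expg_cardG ?inE // lin_char1.
have [z z_prim] := C_prim_root_exists n_gt0.
have [t t_prim] : {t : C | #|gT|.-primitive_root t}.
  by apply: closed_prim_root_exists; rewrite pnatr_eq0 -lt0n.
pose e g : 'I_#|gT| := sval (prim_rootP z_prim (xi_unity g)).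
have xiE g : xi g = z ^+ e g by rewrite /e; case: prim_rootP.
have t_z i j : (t ^+ i == t ^+ j) = (z ^+ i == z ^+ j).
  by rewrite (eq_prim_root_expr t_prim) (eq_prim_root_expr z_prim).
exists (fun g => t ^+ e g); split; first split.
- move=> g h; rewrite -exprD; apply/eqP; rewrite t_z exprD -!xiE.
  by rewrite lin_charM ?inE.
- move=> g; rewrite normrX; suff -> : `|t| = 1 by rewrite expr1n.
  by apply/eqP; rewrite -(pexpr_eq1 n_gt0) // -normrX prim_expr_order // normr1.
- by move=> g; rewrite -(expr0 t) t_z expr0 xiE.
Qed.

Lemma abelian_circle_char_separates (gT : finGroupType) (a : gT) :
  abelian [set: gT] -> a != 1%g -> exists psi : gT -> C, circle_char psi /\ psi a != 1.
Proof.
move=> gT_abelian a_ne1; set G := [set: gT]%G.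
have [i a_notin_ker] : exists i : Iirr G, a \notin cfker 'chi[G]_i.
  apply/existsP; apply: contraR a_ne1 => /existsPn a_in_ker.
  have : a \in \bigcap_i cfker 'chi[G]_i by apply/bigcapP => i _; rewrite -[_ \in _]negbK.
  by rewrite TI_cfker_irr inE.
have chi_lin : 'chi[G]_i \is a linear_char by apply/char_abelianP.
have [psi [psi_char psi1]] := circle_char_of_lin_char chi_lin.
move: a_notin_ker; rewrite cfkerEirr inE lin_char1 // => chi_a_ne1.
by exists psi; rewrite psi1.
Qed.

Lemma dual_char_pairing (A Ahat : finGroupType) (chi : Ahat -> A -> C) :
  abelian [set: A] -> is_dual_pairing chi -> char_pairing chi.
Proof.
move=> A_abelian [chiM chiMr chi_norm _ chi_onto].
split=> [x|a|a a_ne1]; first exact: (conj (chiMr x) (chi_norm x)).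
  exact: (conj (fun x y => chiM x y a) (fun x => chi_norm x a)).
have [psi [[psiM psi_norm] psi_a]] := abelian_circle_char_separates A_abelian a_ne1.
by have [x chi_x] := chi_onto psi psiM psi_norm; exists x; rewrite chi_x.
Qed.

Lemma dual_char_pairing_flip (A Ahat : finGroupType) (chi : Ahat -> A -> C) :
  is_dual_pairing chi -> char_pairing (fun a x => chi x a).
Proof.
move=> [chiM chiMr chi_norm chi_inj _].
have chiT_char a : circle_char (chi^~ a) by split=> [x y|x]; [apply: chiM | apply: chi_norm].
split=> [a|x|x x_ne1]; [exact: chiT_char | exact: (conj (chiMr x) (chi_norm x)) |].
apply/existsP; apply: contraR x_ne1 => /existsPn chi_x1; apply/eqP/chi_inj => a.
have /= -> := circle_char1 (chiT_char a).
by apply/eqP; rewrite -[_ == _]negbK chi_x1.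
Qed.

End ComplexPlane.

(** * Averaging in two variables *)

Section Kappa.
Variables (R : realType) (G : finGroupType) (mu : G -> R).
Hypothesis kappa_fin : kappa mu \is a fin_num.

Lemma kappa_ge0 : 0 <= fine (kappa mu).
Proof.
rewrite -lee_fin fineK //; apply: le_ereal_inf_tmp => _ [k [k_ge0 _] <-].
by rewrite lee_fin.
Qed.

Lemma le_kappa_mul (L c : R) : 0 <= c ->
  (forall k, 0 <= k -> kappa_ineq mu k -> L <= k * c) -> L <= fine (kappa mu) * c.
Proof.
move=> c_ge0 L_le.
have [k0 [k0_ge0 kappa_k0]] : exists k, 0 <= k /\ kappa_ineq mu k.
  case: (pselect (exists k, 0 <= k /\ kappa_ineq mu k)) => // no_k.
  suff kappa_oo : kappa mu = +oo%E by move: kappa_fin; rewrite kappa_oo.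
  by rewrite /kappa; apply/ereal_inf_pinfty => y [k k_adm _]; case: no_k; exists k.
have [c0|c_neq0] := eqVneq c 0.
  by have := L_le k0 k0_ge0 kappa_k0; rewrite c0 !mulr0.
have c_gt0 : 0 < c by rewrite lt_def c_neq0.
rewrite -ler_pdivrMr // -lee_fin fineK //; apply: le_ereal_inf_tmp => _ [k [k_ge0 kappa_k] <-].
by rewrite lee_fin ler_pdivrMr // L_le.
Qed.

End Kappa.

Lemma avg2_le_mul (R : realType) (I J : finType) (f : I -> J -> R) (mu : I -> R) (nu : J -> R)
    (k l : R) :
  (forall i, 0 <= mu i) -> 0 <= k ->
  (forall j, (\sum_i f i j) / #|I|%:R <= k * \sum_i mu i * f i j) ->
  (forall i, (\sum_j f i j) / #|J|%:R <= l * \sum_j nu j * f i j) ->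
  (\sum_i \sum_j f i j) / (#|I|%:R * #|J|%:R)
    <= k * (l * \sum_i \sum_j mu i * nu j * f i j).
Proof.
move=> mu_ge0 k_ge0 avg_I avg_J.
have -> : (\sum_i \sum_j f i j) / (#|I|%:R * #|J|%:R)
    = (\sum_j (\sum_i f i j) / #|I|%:R) / #|J|%:R.
  by rewrite exchange_big /= invfM mulrA -mulr_suml.
apply: (le_trans (y := (\sum_j k * \sum_i mu i * f i j) / #|J|%:R)).
  by rewrite ler_wpM2r ?invr_ge0 ?ler0n //; apply: ler_sum => j _; apply: avg_I.
rewrite -mulr_sumr -mulrA; apply: ler_wpM2l => //.
have -> : (\sum_j \sum_i mu i * f i j) / #|J|%:R = \sum_i mu i * ((\sum_j f i j) / #|J|%:R).
  by rewrite exchange_big mulr_suml; apply: eq_bigr => i _; rewrite -mulr_sumr mulrA.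
have -> : l * \sum_i \sum_j mu i * nu j * f i j = \sum_i mu i * (l * \sum_j nu j * f i j).
  rewrite mulr_sumr; apply: eq_bigr => i _; rewrite [RHS]mulrCA [in RHS]mulr_sumr.
  by congr (_ * _); apply: eq_bigr => j _; rewrite mulrA.
by apply: ler_sum => i _; apply: ler_wpM2l.
Qed.

Theorem corollary2p5 (R : realType) (A Ahat : finGroupType)
    (chi : Ahat -> A -> R[i]) (mu : A -> R) (nu : Ahat -> R)
    (M : algType R[i]) (star : M -> M) (tau : M -> R[i])
    (U : A -> M) (V : Ahat -> M) (eps : R) :
  abelian [set: A]%g ->
  is_dual_pairing chi ->
  is_prob mu -> is_prob nu ->
  is_star star -> is_faithful_tracial_state star tau ->
  unitary_hom star U -> unitary_hom star V ->
  \sum_(a : A) \sum_(x : Ahat)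
      mu a * nu x * norm2sq star tau (U a * V x - chi x a *: (V x * U a))
    <= eps ->
  kappa mu \is a fin_num -> kappa nu \is a fin_num ->
  (\sum_(a : A) \sum_(x : Ahat)
      norm2sq star tau (U a * V x - chi x a *: (V x * U a)))
    / (#|A|%:R * #|Ahat|%:R)
    <= fine (kappa mu) * fine (kappa nu) * eps.
Proof.
move=> A_abelian chi_dual [mu_ge0 _] [nu_ge0 _] star_M tau_M U_hom V_hom S_le_eps
  kappa_mu_fin kappa_nu_fin.
have chi_pairing := dual_char_pairing A_abelian chi_dual.
have chiT_pairing := dual_char_pairing_flip chi_dual.
have [chi_char _ _] := chi_pairing.
set S := (X in X <= eps) in S_le_eps.
pose f a x := norm2sq star tau (U a * V x - chi x a *: (V x * U a)).
have S_ge0 : 0 <= S by do 2![apply: sumr_ge0 => ? _]; rewrite !mulr_ge0 ?norm2sq_ge0.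
have avg_A k x : kappa_ineq mu k ->
    (\sum_a f a x) / #|A|%:R <= k * \sum_a mu a * f a x.
  exact: avg_commutator_le_kappa chi_pairing U_hom (V_hom.1 x) (chi_char x).
have avg_B k a : kappa_ineq nu k ->
    (\sum_x f a x) / #|Ahat|%:R <= k * \sum_x nu x * f a x.
  have chi_a_norm x : `|chi x a| = 1 by case: chi_dual.
  have [chiT_char _ _] := chiT_pairing.
  rewrite /f; under eq_bigr do rewrite norm2sq_commutatorC //.
  under [X in _ <= k * X]eq_bigr do rewrite norm2sq_commutatorC //.
  exact: avg_commutator_le_kappa chiT_pairing V_hom (U_hom.1 a) (circle_charJ (chiT_char a)).
apply: (le_trans (y := fine (kappa mu) * (fine (kappa nu) * S))).
  apply: le_kappa_mul => // [|k_mu k_mu_ge0 kappa_k_mu].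
    exact: mulr_ge0 (kappa_ge0 _) S_ge0.
  rewrite mulrCA; apply: le_kappa_mul => // [|k_nu _ kappa_k_nu]; first exact: mulr_ge0.
  by rewrite mulrCA; apply: avg2_le_mul => // [x|a]; [apply: avg_A | apply: avg_B].
by rewrite mulrA ler_wpM2l // mulr_ge0 // kappa_ge0.
Qed.
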